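(* In the setting below, the vector $\tau R=1\otimes e^{\lambda_1-\lambda_6}+1\otimes e^{-\lambda_3+\lambda_5}-1\otimes e^{-\lambda_1+\lambda_3-\lambda_5+\lambda_6}\in V^{\Lambda_6}$ is a highest weight vector of type $Vir(\tfrac45,\tfrac23)\otimes W^{\Omega_0}$, i.e. it satisfies (HW1)–(HW5) with $h=2/3$ and $\omega_j=0$.
   Context: Setting. $Q$ is the $E_6$ root lattice with simple roots $\alpha_1,\dots,\alpha_6$ (Dynkin chain $\alpha_1-\alpha_3-\alpha_4-\alpha_5-\alpha_6$, $\alpha_2$ attached to $\alpha_4$), form from the Cartan matrix, fundamental weights $\lambda_i$, $P=\bigoplus\mathbb Z\lambda_i$, $\mathfrak h=\mathbb C\otimes P$. $\varepsilon$ bimultiplicative on $P$ with $[\varepsilon(\lambda_i,\lambda_j)]$ rows $(1,1,1,1,1,1)$, $(-1,1,1,1,1,-1)$, $(-1,1,1,1,1,1)$, $(1,-1,1,1,1,1)$, $(1,1,1,1,1,-1)$, $(1,1,1,1,1,1)$. $V_P=S(\hat{\mathfrak h}^-)\otimes\mathbb C[P]$ with Heisenberg operators $h(n)$ ($[h(m),h'(n)]=m\langle h,h'\rangle\delta_{m+n,0}$, $h(n)1=0$ for $n>0$, $h(0)(u\otimes e^\beta)=\langle h,\beta\rangle u\otimes e^\beta$). For $\alpha\in Q$, acting on $V_P$: $Y(1\otimes e^\alpha,z)=\exp(\sum_{k\ge1}\frac{\alpha(-k)}kz^k)\exp(-\sum_{k\ge1}\frac{\alpha(k)}kz^{-k})e_\alpha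 z^{\alpha(0)}=\sum_n\{1\otimes e^\alpha\}_nz^{-n-1}$, $e_\alpha(u\otimes e^\beta)=\varepsilon(\alpha,\beta)u\otimes e^{\alpha+\beta}$, $z^{\alpha(0)}(u\otimes e^\beta)=z^{\langle\alpha,\beta\rangle}u\otimes e^\beta$; $Y(h_1(-1)\cdots h_k(-1)\otimes e^\alpha,z)=\,:h_1(z)\cdots h_k(z)Y(1\otimes e^\alpha,z):$, $h(z)=\sum_nh(n)z^{-n-1}$. $V^{\Lambda_6}$ is spanned by $S(\hat{\mathfrak h}^-)\otimes e^\nu$, $\nu\in\lambda_6+Q$. $\tau$: $\alpha_1\leftrightarrow\alpha_6$, $\alpha_3\leftrightarrow\alpha_5$; $\mathrm{Proj}(\nu)=(\nu+\tau\nu)/2$. $\theta=\alpha_1+2\alpha_2+2\alpha_3+3\alpha_4+2\alpha_5+\alpha_6$. Raising operators of $\tilde{\mathfrak a}$ ($F_4^{(1)}$): $\{\beta_1\}_0=\{1\otimes e^{\alpha_2}\}_0$, $\{\beta_2\}_0=\{1\otimes e^{\alpha_4}\}_0$, $\{\beta_3\}_0=\{1\otimes e^{\alpha_3}\}_0+\{1\otimes e^{\alpha_5}\}_0$, $\{\beta_4\}_0=\{1\otimes e^{\alpha_1}\}_0+\{1\otimes e^{\alpha_6}\}_0$, $\{1\otimes e^{-\theta}\}_1$. Coset conformal vector $\omega=\frac1{10}[(-\lambda_1+\lambda_6)(-1)^2+(\lambda_3-\lambda_5)(-1)^2+(\lambda_1-\lambda_3+\lambda_5-\lambda_6)(-1)^2]\otimes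 e^0+\frac15(-1\otimes e^{\pm\gamma_1}-1\otimes e^{\pm\gamma_2}+1\otimes e^{\pm\gamma_3})$, $\gamma_1=\alpha_1-\alpha_6$, $\gamma_2=\alpha_3-\alpha_5$, $\gamma_3=\gamma_1+\gamma_2$, $1\otimes e^{\pm\gamma}:=1\otimes e^\gamma+1\otimes e^{-\gamma}$; $L(n)=\{\omega\}_{n+1}$ (Virasoro, $c=4/5$, commuting with $\tilde{\mathfrak a}$). $W^{\Omega_0}$ is the basic level one irreducible $F_4^{(1)}$-module. A nonzero $v$ is a highest weight vector of type $Vir(\frac45,h)\otimes W^{\Omega_j}$ if (HW1) $\{1\otimes e^{-\theta}\}_1v=0$; (HW2) $\{\beta_i\}_0v=0$, $i=1,\dots,4$; (HW3) $L(1)v=L(2)v=0$; (HW4) $L(0)v=hv$; (HW5) $v\in\bigoplus_kS(\hat{\mathfrak h}^-)\otimes e^{\nu_k}$ with $\mathrm{Proj}(\nu_k)=\omega_j$ ($\omega_0=0$). *)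

(* Concrete, computable model of the lattice vertex operator
   algebra V_P for the E_6 weight lattice P, following the paper's setting.
   Scalars: rat (all structure constants are rational). *)
From mathcomp Require Import all_boot all_algebra.
Set Implicit Arguments. Unset Strict Implicit. Unset Printing Implicit Defensive.
Import GRing.Theory Num.Theory.
Local Open Scope ring_scope.

(* ---------- indices: i = 0..5 stands for the simple root / weight number i+1 *)
Definition idx : seq nat := iota 0 6.
Definition sumq (s : seq rat) : rat := foldr (fun x y => x + y) 0 s.
Definition sumz (s : seq int) : int := foldr (fun x y => x + y) 0 s.

(* Dynkin diagram of E_6: chain a1 - a3 - a4 - a5 - a6, a2 attached to a4. *)
Definition adjE6 (i j : nat) : bool :=
  (i, j) \in [:: (0,2); (2,0); (2,3); (3,2); (3,4); (4,3); (4,5); (5,4); (1,3); (3,1)]%N.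
Definition cartan (i j : nat) : int :=
  if i == j then 2 else if adjE6 i j then -1 else 0.

(* <lambda_i, lambda_j> = (Cartan matrix)^{-1}_{ij}  (certified by gram_inverse) *)
Definition invcartan_tab : seq (seq rat) :=
  [:: [:: 4/3; 1; 5/3; 2; 4/3; 2/3];
      [:: 1;   2; 2;   3; 2;   1  ];
      [:: 5/3; 2; 10/3; 4; 8/3; 4/3];
      [:: 2;   3; 4;   6; 4;   2  ];
      [:: 4/3; 2; 8/3; 4; 10/3; 5/3];
      [:: 2/3; 1; 4/3; 2; 5/3; 4/3]].
Definition gram (i j : nat) : rat := nth 0 (nth [::] invcartan_tab i) j.

(* ---------- h = C (x) P, elements given by coordinates on lambda_1..lambda_6 *)
Definition hvec := seq rat.
Definition form (x y : hvec) : rat :=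
  sumq [seq sumq [seq nth 0 x i * gram i j * nth 0 y j | j <- idx] | i <- idx].
Definition unitv (i : nat) : hvec := [seq (i == j)%:R | j <- idx].

(* ---------- the lattices.  pw : element of P in lambda-coordinates;
   rw : element of Q in alpha-coordinates (alpha_i = sum_j cartan i j lambda_j) *)
Definition pw := seq int.
Definition rw := seq int.
Definition toP (a : rw) : pw :=
  [seq sumz [seq nth 0 a i * cartan i j | i <- idx] | j <- idx].
Definition addP (b c : pw) : pw := [seq nth 0 b i + nth 0 c i | i <- idx].
Definition hofP (b : pw) : hvec := [seq (x%:~R : rat) | x <- b].
(* <alpha, beta> for alpha in Q (alpha-coords), beta in P (lambda-coords) *)
Definition pair_QP (a : rw) (b : pw) : int := sumz [seq nth 0 a i * nth 0 b i | i <- idx].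

(* epsilon: bimultiplicative, eps(lambda_i,lambda_j) = -1 exactly for these (i,j) *)
Definition eps_neg : seq (nat * nat) := [:: (1,0); (1,5); (2,0); (3,1); (4,5)]%N.
Definition eps (mu nu : pw) : rat :=
  if odd (absz (sumz [seq nth 0 mu p.1 * nth 0 nu p.2 | p <- eps_neg])) then -1 else 1.

(* ---------- V_P = S(h^-) (x) C[P].
   A basis element is (m, beta): m lists Heisenberg generators (i, k), each
   standing for lambda_i(-k) (k >= 1), multiplied together (order irrelevant);
   beta : pw. *)
Definition mono := seq (nat * nat).
Definition basis := (mono * pw)%type.
Definition vec := seq (rat * basis).
Definition deg (m : mono) : nat := sumn (map snd m).

Definition coef (v : vec) (b : basis) : rat :=
  sumq [seq t.1 | t <- v & perm_eq t.2.1 b.1 && (t.2.2 == b.2)].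
Definition vzero (v : vec) : Prop := forall b, coef v b = 0.
Definition vnonzero (v : vec) : Prop := exists b, coef v b != 0.

Definition scalev (c : rat) (v : vec) : vec := [seq (c * t.1, t.2) | t <- v].
Definition liftv (f : basis -> vec) (v : vec) : vec :=
  flatten [seq scalev t.1 (f t.2) | t <- v].
Definition rem_at (t : nat) (m : mono) : mono := take t m ++ drop t.+1 m.

Definition hop (h : hvec) (n : int) (b : basis) : vec :=
  match n with
  | Negz k => [seq (nth 0 h i, ((i, k.+1) :: b.1, b.2)) | i <- idx]
  | Posz 0 => [:: (form h (hofP b.2), b)]
  | Posz (S k) =>
      [seq ((k.+1)%:R * form h (unitv (nth (0, 0) b.1 t).1), (rem_at t b.1, b.2))
      | t <- iota 0 (size b.1) & (nth (0, 0)%N b.1 t).2 == k.+1]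
  end.
Definition hopv (h : hvec) (n : int) : vec -> vec := liftv (hop h n).

(* coefficient of z^m in exp(sum_{k>=1} h(-k)/k z^k):  m S_m = sum_k h(-k) S_{m-k} *)
Fixpoint Sminus_list (h : hvec) (n : nat) : seq (vec -> vec) :=
  if n is n'.+1 then
    let L := Sminus_list h n' in
    rcons L (fun v => scalev (n'.+1%:R)^-1
      (flatten [seq hopv h (- (k%:Z)) (nth (@id vec) L (n'.+1 - k)%N v) | k <- iota 1 n'.+1]))
  else [:: @id vec].
Definition Sminus (h : hvec) (m : nat) : vec -> vec := nth (@id vec) (Sminus_list h m) m.

(* coefficient of z^{-j} in exp(-sum_{k>=1} h(k)/k z^{-k}): j T_j = - sum_k h(k) T_{j-k} *)
Fixpoint Tplus_list (h : hvec) (n : nat) : seq (vec -> vec) :=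
  if n is n'.+1 then
    let L := Tplus_list h n' in
    rcons L (fun v => scalev (- (n'.+1%:R)^-1)
      (flatten [seq hopv h (k%:Z) (nth (@id vec) L (n'.+1 - k)%N v) | k <- iota 1 n'.+1]))
  else [:: @id vec].
Definition Tplus (h : hvec) (j : nat) : vec -> vec := nth (@id vec) (Tplus_list h j) j.

(* {1 (x) e^alpha}_p on a basis element: coefficient of z^{-p-1} in
   E^-(alpha,z) E^+(alpha,z) e_alpha z^{alpha(0)}.  Only j <= deg can contribute. *)
Definition modeE (a : rw) (p : int) (b : basis) : vec :=
  let s := pair_QP a b.2 in
  let al := toP a in
  let ha := hofP al in
  let b' := [:: (eps al b.2, (b.1, addP al b.2))] in
  flatten [seq (let e := j%:Z - p - 1 - s in
                if 0 <= e then Sminus ha (absz e) (Tplus ha j b') else [::])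
          | j <- iota 0 (deg b.1).+1].

(* {h_1(-1)...h_r(-1) (x) e^alpha}_p, the modes of
   :h_1(z) ... h_r(z) Y(1 (x) e^alpha, z):, where
   :h(z) X(z): = h^-(z) X(z) + X(z) h^+(z), h^-(z) = sum_{n<0} h(n) z^{-n-1},
   h^+(z) = sum_{n>=0} h(n) z^{-n-1}.  The (a priori infinite) sums are cut off
   at bounds beyond which every term vanishes: the mode q of
   :h_2(z)..h_r(z)Y(e^alpha,z): kills (m,beta) once q >= deg m + (r-1) - <alpha,beta>,
   and h(n) kills (m,beta) for n > deg m. *)
Fixpoint modeY (hs : seq hvec) (a : rw) (p : int) (b : basis) {struct hs} : vec :=
  match hs with
  | [::] => modeE a p b
  | h :: hs' =>
      let B := absz (((deg b.1)%:Z + (size hs')%:Z - pair_QP a b.2 - p)%R : int) in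
      flatten [seq hopv h (- (M%:Z)) (modeY hs' a (p + M%:Z - 1) b) | M <- iota 1 B]
      ++ flatten [seq liftv (modeY hs' a (p - m%:Z - 1)) (hop h m%:Z b)
                 | m <- iota 0 (deg b.1).+1]
  end.

(* a state of the form h_1(-1)...h_r(-1) (x) e^alpha, alpha in Q *)
Definition state := (seq hvec * rw)%type.
Definition mode (u : seq (rat * state)) (n : int) (v : vec) : vec :=
  flatten [seq scalev t.1 (liftv (modeY t.2.1 t.2.2 n) v) | t <- u].
Definition estate (a : rw) : seq (rat * state) := [:: (1, ([::], a))].

Definition alpha (i : nat) : rw := [seq (i == j)%:R | j <- idx].
Definition neg_theta : rw := [:: -1; -2; -2; -3; -2; -1].
Definition h_1 : hvec := [:: -1; 0; 0; 0; 0; 1].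
Definition h_2 : hvec := [:: 0; 0; 1; 0; -1; 0].
Definition h_3 : hvec := [:: 1; 0; -1; 0; 1; -1].
Definition gamma1 : rw := [:: 1; 0; 0; 0; 0; -1].
Definition gamma2 : rw := [:: 0; 0; 1; 0; -1; 0].
Definition gamma3 : rw := [:: 1; 0; 1; 0; -1; -1].   (* gamma1 + gamma2 *)
Definition zeroQ : rw := nseq 6 0.
Definition oppQ (a : rw) : rw := [seq - x | x <- a].

Definition omega : seq (rat * state) :=
  [:: (1/10, ([:: h_1; h_1], zeroQ));
      (1/10, ([:: h_2; h_2], zeroQ));
      (1/10, ([:: h_3; h_3], zeroQ));
      (-1/5, ([::], gamma1)); (-1/5, ([::], oppQ gamma1));
      (-1/5, ([::], gamma2)); (-1/5, ([::], oppQ gamma2));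
      ( 1/5, ([::], gamma3)); ( 1/5, ([::], oppQ gamma3))].
Definition Lvir (n : int) (v : vec) : vec := mode omega (n + 1) v.

(* raising operators of F_4^(1) *)
Definition raise_beta1 v := mode (estate (alpha 1)) 0 v.
Definition raise_beta2 v := mode (estate (alpha 3)) 0 v.
Definition raise_beta3 v := mode (estate (alpha 2)) 0 v ++ mode (estate (alpha 4)) 0 v.
Definition raise_beta4 v := mode (estate (alpha 0)) 0 v ++ mode (estate (alpha 5)) 0 v.
Definition raise_theta v := mode (estate neg_theta) 1 v.

Definition tauP (b : pw) : pw := [seq nth 0 b i | i <- [:: 5; 1; 4; 3; 2; 0]%N].
Definition Proj (b : pw) : hvec := [seq ((nth 0 b i + nth 0 (tauP b) i)%:~R : rat) / 2 | i <- idx].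

Definition lam6 : pw := [:: 0; 0; 0; 0; 0; 1].
Definition in_VLambda6 (v : vec) : Prop :=
  forall b, coef v b != 0 -> exists a : rw, b.2 = addP lam6 (toP a).

Definition hw_vector (h : rat) (wj : hvec) (v : vec) : Prop :=
  vnonzero v /\
  [/\ vzero (raise_theta v),                                         (* HW1 *)
      [/\ vzero (raise_beta1 v), vzero (raise_beta2 v),
          vzero (raise_beta3 v) & vzero (raise_beta4 v)],           (* HW2 *)
      (vzero (Lvir 1 v) /\ vzero (Lvir 2 v)),                          (* HW3 *)
      vzero (Lvir 0 v ++ scalev (- h) v)                             (* HW4 *)
    & forall b, coef v b != 0 -> Proj b.2 = wj].                    (* HW5 *)

Definition zero_h : hvec := nseq 6 0.
Definition tauR : vec :=
  [:: (1, ([::], [:: 1; 0; 0; 0; 0; -1]));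
      (1, ([::], [:: 0; 0; -1; 0; 1; 0]));
      (-1, ([::], [:: -1; 0; 1; 0; -1; 1]))].

Lemma gram_inverse :
  all (fun i => all (fun j =>
    sumq [seq (cartan i k)%:~R * gram k j | k <- idx] == (i == j)%:R) idx) idx.
Proof. by vm_compute. Qed.

(* All operators in (HW1)-(HW4) are given by explicit finite formulas in the
   Heisenberg and lattice coordinates, and tau R has only three terms, so each
   vanishing condition amounts to finitely many rational coefficients being
   zero, which is decided by evaluation.  (HW5) and membership in V^{Lambda_6}
   only depend on the three lattice weights occurring in tau R. *)
From mathcomp Require Import all_boot all_algebra.
Local Open Scope ring_scope.

(* Every basis element with a nonzero coefficient occurs in [v] up to
   reordering of the monomial, so testing the basis elements listed in [v]
   suffices. *)
Definition vzerob (v : vec) : bool := all (fun t => coef v t.2 == 0) v.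

Lemma coef_perm (v : vec) (b b' : basis) :
  perm_eq b.1 b'.1 -> b.2 = b'.2 -> coef v b = coef v b'.
Proof.
move=> pbb' eq2; rewrite /coef eq2; congr (sumq (map _ _)).
apply: eq_filter => t; congr andb.
have pb'b : perm_eq b'.1 b.1 by rewrite perm_sym.
by apply/idP/idP => pt; [apply: perm_trans pbb' | apply: perm_trans pb'b].
Qed.

Lemma coef_support (v : vec) (b : basis) : coef v b != 0 ->
  exists2 t, t \in v & perm_eq t.2.1 b.1 && (t.2.2 == b.2).
Proof.
move=> nz; apply/hasP; apply: contraR nz => /hasPn none; rewrite /coef.
suff -> : [seq t <- v | perm_eq t.2.1 b.1 && (t.2.2 == b.2)] = [::] by [].
by apply/eqP; rewrite -[_ == _]negbK -has_filter; apply/hasPn.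
Qed.

Lemma vzerob_vzero (v : vec) : vzerob v -> vzero v.
Proof.
move=> /allP vz b.
have [/eqP //|/coef_support[t tv /andP[pt /eqP e2]]] := boolP (coef v b == 0).
by rewrite -(coef_perm v _ _ pt e2); apply/eqP; exact: vz.
Qed.

Lemma coef_neq0_weight (P : pw -> Prop) (v : vec) (b : basis) :
  {in v, forall t, P t.2.2} -> coef v b != 0 -> P b.2.
Proof. by move=> vP /coef_support[t tv /andP[_ /eqP <-]]; apply: vP. Qed.

(* The witnesses are the alpha-coordinates of nu - lambda_6. *)
Lemma tauR_in_VLambda6 : in_VLambda6 tauR.
Proof.
move=> b; apply: (coef_neq0_weight (fun nu => exists a, nu = addP lam6 (toP a))).
move=> t; rewrite !inE => /or3P[] /eqP -> /=.
- by exists [:: 0; -1; -1; -2; -2; -2]; vm_compute.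
- by exists [:: -1; -1; -2; -2; -1; -1]; vm_compute.
- by exists [:: -1; -1; -1; -2; -2; -1]; vm_compute.
Qed.

Lemma tauR_Proj_weight b : coef tauR b != 0 -> Proj b.2 = zero_h.
Proof.
apply: (coef_neq0_weight (fun nu => Proj nu = zero_h)) => t.
by rewrite !inE => /or3P[] /eqP -> /=; vm_compute.
Qed.

Theorem lemma6p18 : in_VLambda6 tauR /\ hw_vector (2 / 3) zero_h tauR.
Proof.
split; first exact: tauR_in_VLambda6.
split; first by exists ([::], [:: 1; 0; 0; 0; 0; -1]); vm_compute.
split; last exact: tauR_Proj_weight.
- by apply: vzerob_vzero; vm_compute.
- by split; apply: vzerob_vzero; vm_compute.
- by split; apply: vzerob_vzero; vm_compute.
- by apply: vzerob_vzero; vm_compute.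
Qed.
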